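(* Let $n\ge 2$ and $t\ge 0$ be integers, and let $a_1,\dots,a_t$ be integers with $1<a_1<\cdots<a_t<n$ and $\gcd(a_j,2n)=1$ for $1\le j\le t$. Then $\chi_{la}(C_{2n}(1,a_1,\dots,a_t))=3$.
   Context: For an integer $m\ge 3$ and integers $s_1,\dots,s_k$, the circulant graph $C_m(s_1,\dots,s_k)$ is the simple graph with vertex set $\mathbb Z_m$ in which distinct vertices $u,v$ are adjacent if and only if $u-v\equiv \pm s_i\pmod m$ for some $i$. For a connected graph $G=(V,E)$ with $q=|E|$, a local antimagic labeling is a bijection $f:E\to\{1,\dots,q\}$ such that adjacent vertices $x,y$ satisfy $f^+(x)\ne f^+(y)$, where $f^+(x)=\sum f(e)$ over edges $e$ incident to $x$; $\chi_{la}(G)$ is the minimum number of distinct values of $f^+$ over all local antimagic labelings $f$ of $G$. *)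

From mathcomp Require Import all_boot.
Set Implicit Arguments. Unset Strict Implicit. Unset Printing Implicit Defensive.

Definition circ_adj (m : nat) (S : seq nat) : rel 'I_m :=
  fun u v => (u != v) &&
    has (fun s => ((u : nat) == (v + s) %% m) || ((v : nat) == (u + s) %% m)) S.

Section LA.
Variables (T : finType) (adj : rel T).

Definition edges : {set {set T}} :=
  [set e : {set T} | [exists x, exists y, adj x y && (e == [set x; y])]].

Definition vsum (f : {set T} -> nat) (x : T) : nat :=
  \sum_(e in edges | x \in e) f e.

Definition edge_bij (f : {set T} -> nat) : Prop :=
  {in edges &, injective f} /\
  (forall k, 1 <= k <= #|edges| -> exists2 e, e \in edges & f e = k) /\
  (forall e, e \in edges -> 1 <= f e <= #|edges|).

Definition local_antimagic (f : {set T} -> nat) : Prop :=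
  edge_bij f /\ (forall x y, adj x y -> vsum f x != vsum f y).

Definition n_colors (f : {set T} -> nat) : nat :=
  size (undup [seq vsum f x | x <- enum T]).

Definition chi_la_eq (k : nat) : Prop :=
  (exists f, local_antimagic f /\ n_colors f = k) /\
  (forall f, local_antimagic f -> k <= n_colors f).
End LA.

From mathcomp Require Import all_boot zify.
Set Implicit Arguments. Unset Strict Implicit. Unset Printing Implicit Defensive.

(* Every generator is odd, so each edge joins an even and an odd vertex, and both
   parity classes have n vertices.  If a local antimagic labeling had only two
   vertex sums, the path 0, 1, ..., 2n-1 would force them to alternate with
   parity; summing over either class counts every edge label exactly once, so
   n c_even = n c_odd, a contradiction.
   Conversely, a generator s coprime to 2n runs through all vertices along the
   Hamiltonian cycle k |-> k s.  Label the edge from the k-th to the (k+1)-th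
   vertex of the j-th such cycle by 2jn + g k, where g is a bijection from
   {0, ..., 2n-1} onto {1, ..., 2n} with g k + g (k-1) equal to 2n+1 for k even
   and to 2n for k odd, except 3n for k = 2n-1.  Every even vertex then gets the
   sum base + L (L the number of generators) and every odd vertex base or
   base + n, since an odd vertex x is the last vertex of the j-th cycle only if
   x = -s_j, which happens for at most one j. *)

Section VertexSums.
Variables (T : finType) (adj : rel T).

Lemma sum_vsum_transversal (f : {set T} -> nat) (P : pred T) :
  (forall e, e \in edges adj -> #|[pred x in e | P x]| = 1) ->
  \sum_(x | P x) vsum adj f x = \sum_(e in edges adj) f e.
Proof.
move=> meet1; rewrite /vsum; under eq_bigr do rewrite big_mkcondr.
rewrite exchange_big /=.
apply: eq_bigr => e /meet1 card_e; rewrite -big_mkcondr sum_nat_const.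
rewrite -[RHS]mul1n -card_e; congr (_ * _); apply: eq_card => x.
by rewrite !inE andbC.
Qed.

Lemma edge_meets_side (p : T -> bool) :
  (forall x y, adj x y -> p x != p y) ->
  forall b e, e \in edges adj -> #|[pred x in e | p x == b]| = 1.
Proof.
move=> bip b e; rewrite inE => /existsP[x /existsP[y /andP[xy /eqP ->]]].
have := bip x y xy; rewrite -(card1 (if p x == b then x else y)) => pxy.
apply: eq_card => z; rewrite !inE.
have xny : x != y by apply: contraNneq pxy => ->.
case: (z =P x) => [-> | /eqP zx] /=.
  by case: ifP; rewrite ?eqxx // (negbTE xny).
case: (z =P y) => [-> | /eqP zy] /=; last by case: ifP => _; apply/esym/negbTE.
move: pxy; case: ifP; rewrite ?eqxx ?(eq_sym y) ?(negbTE xny);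
  by case: (p x) (p y) b => [] [] [].
Qed.

Lemma vsum_two_valued (f : {set T} -> nat) (x0 x1 x : T) :
  n_colors adj f <= 2 -> vsum adj f x0 != vsum adj f x1 ->
  (vsum adj f x == vsum adj f x0) || (vsum adj f x == vsum adj f x1).
Proof.
move=> few ne01; apply/negPn/negP => /norP[ne0 ne1].
have vsum_mem y : vsum adj f y \in undup [seq vsum adj f z | z <- enum T].
  by rewrite mem_undup map_f ?mem_enum.
suff: 3 <= n_colors adj f by rewrite leqNgt ltnS few.
rewrite /n_colors -[3]/(size [:: vsum adj f x; vsum adj f x0; vsum adj f x1]).
apply: uniq_leq_size => [|z]; first by rewrite /= !inE negb_or ne0 ne1 ne01.
by rewrite !inE => /or3P[] /eqP ->.
Qed.

End VertexSums.

Section InducedLabeling.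
Variables (T I : finType) (adj : rel T) (D : I -> {set T}) (label : I -> nat).
Hypotheses (D_inj : injective D) (edgesE : edges adj = D @: setT).

Definition induced_labeling (e : {set T}) : nat :=
  if [pick i | D i == e] is Some i then label i else 0.

Lemma induced_labelingE i : induced_labeling (D i) = label i.
Proof.
by rewrite /induced_labeling; case: pickP => [j /eqP/D_inj -> | /(_ i)]; rewrite ?eqxx.
Qed.

Lemma card_edges_param : #|edges adj| = #|I|.
Proof. by rewrite edgesE card_imset // cardsT. Qed.

Lemma vsum_induced x : vsum adj induced_labeling x = \sum_(i | x \in D i) label i.
Proof.
rewrite /vsum edgesE big_imset_cond /=; last by move=> i j _ _ /D_inj.
by apply: eq_big => [i | i _]; rewrite ?inE ?induced_labelingE.
Qed.

Hypotheses (label_inj : injective label) (label_range : forall i, 0 < label i <= #|I|).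

Lemma edge_bij_induced : edge_bij adj induced_labeling.
Proof.
rewrite /edge_bij card_edges_param edgesE; split; last split.
- move=> _ _ /imsetP[i _ ->] /imsetP[j _ ->].
  by rewrite !induced_labelingE => /label_inj ->.
- move=> k k_range.
  have label_lt i : (label i).-1 < #|I| by have := label_range i; lia.
  have code_inj : injective (fun i => Ordinal (label_lt i)).
    move=> i j [] /(congr1 succn); rewrite !prednK ?(andP (label_range _)).1 //.
    by move/label_inj.
  have k_lt : k.-1 < #|I| by lia.
  have /codomP[i [/= label_i]] :=
    inj_card_onto code_inj (eq_leq (card_ord _)) (Ordinal k_lt).
  by exists (D i); [exact: imset_f | rewrite induced_labelingE; have := label_range i; lia].
- by move=> _ /imsetP[i _ ->]; rewrite induced_labelingE.
Qed.

End InducedLabeling.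

Lemma card_odd_ord (n : nat) (b : bool) : #|[pred i : 'I_(2 * n) | odd i == b]| = n.
Proof.
rewrite -sum1_card big_mkcond /=.
rewrite -(big_mkord xpredT (fun i => if odd i == b then 1 else 0)).
elim: n => [|n IHn]; first by rewrite big_geq.
by rewrite mulnS addSn add1n !big_nat_recr //= IHn oddM /=; clear IHn; case: b => /=; lia.
Qed.

Lemma three_le_n_colors (n : nat) (adj : rel 'I_(2 * n)) (f : {set 'I_(2 * n)} -> nat) :
  0 < n ->
  (forall x y : 'I_(2 * n), val y = (val x).+1 -> adj x y) ->
  (forall x y, adj x y -> odd x != odd y) ->
  local_antimagic adj f -> 3 <= n_colors adj f.
Proof.
move=> n_gt0 adj_succ bip [_ antimagic]; rewrite leqNgt ltnS; apply/negP => few.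
have lt02 : 0 < 2 * n by lia.
have lt12 : 1 < 2 * n by lia.
pose c b := vsum adj f (if b then Ordinal lt12 else Ordinal lt02).
have c_neq : c false != c true by apply: antimagic; apply: adj_succ.
have alternate i (lt_i : i < 2 * n) : vsum adj f (Ordinal lt_i) = c (odd i).
  elim: i lt_i => [|i IHi] lt_i; first by congr (vsum _ _ _); apply: val_inj.
  have lt_i' : i < 2 * n by lia.
  have := antimagic _ _ (adj_succ (Ordinal lt_i') (Ordinal lt_i) erefl).
  have := vsum_two_valued (Ordinal lt_i) few c_neq; rewrite IHi /=.
  by case: (odd i) => /orP[] /eqP ->; rewrite ?eqxx.
have side_sum b : \sum_(x : 'I_(2 * n) | odd x == b) vsum adj f x = n * c b.
  rewrite (eq_bigr (fun _ => c b)) ?sum_nat_const ?card_odd_ord 1?mulnC //.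
  by move=> [i lt_i] /= /eqP <-; apply: alternate.
have := sum_vsum_transversal f (edge_meets_side bip false).
rewrite -(sum_vsum_transversal f (edge_meets_side bip true)) !side_sum.
by move/eqP; rewrite eqn_pmul2l // (negbTE c_neq).
Qed.

Lemma eqn_modMr_coprime s m k k' :
  coprime s m -> (k * s == k' * s %[mod m]) = (k == k' %[mod m]).
Proof.
move=> co; wlog le_k'k : k k' / k' <= k.
  move=> W; case: (leqP k' k) => [|/ltnW] /W //.
  by rewrite [LHS]eq_sym [RHS]eq_sym.
rewrite !eqn_mod_dvd ?leq_mul2r ?le_k'k ?orbT // -mulnBl Gauss_dvdl //.
by rewrite coprime_sym.
Qed.

Lemma ord_pred_neq m (k : 'I_m) : 1 < m -> ord_pred k != k.
Proof.
move=> m_gt1; apply/eqP => /(congr1 (@ordS m)); rewrite ord_predK => /(congr1 val) /=.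
have := ltn_ord k; case: (ltngtP k.+1 m) => [lt_km _ | // | eq_km _].
  by rewrite modn_small //; lia.
by rewrite eq_km modnn; lia.
Qed.

Definition cycle_label (n k : nat) : nat :=
  if odd k then (if k.+1 == 2 * n then 2 * n else 2 * n - (k./2).+1) else (k./2).+1.

Lemma cycle_label_range n k : k < 2 * n -> 0 < cycle_label n k <= 2 * n.
Proof.
rewrite /cycle_label; have := odd_double_half k.
by case: odd => /=; [case: eqP|]; lia.
Qed.

Lemma cycle_label_inj n : injective (fun k : 'I_(2 * n) => cycle_label n k).
Proof.
move=> k k' E; apply: val_inj; move: E (ltn_ord k) (ltn_ord k'); rewrite /cycle_label /=.
have := odd_double_half k; have := odd_double_half k'.
by case: (odd k); case: (odd k') => /=; do 2?case: eqP; lia.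
Qed.

Lemma cycle_label_pred n (k : 'I_(2 * n)) :
  cycle_label n k + cycle_label n (ord_pred k) =
  if ~~ odd k then (2 * n).+1 else if k.+1 == 2 * n then 3 * n else 2 * n.
Proof.
have lt_k := ltn_ord k.
have -> : (ord_pred k : nat) = if k == 0 :> nat then (2 * n).-1 else k.-1.
  rewrite /=; case: posnP => [-> | k_gt0]; first by rewrite modn_small //; lia.
  by rewrite (_ : (k + 2 * n).-1 = k.-1 + 2 * n) ?modnDr ?modn_small //; lia.
rewrite /cycle_label; case: posnP => [-> | k_gt0] /=.
  have := odd_double_half (2 * n).-1.
  by case: odd => /=; do ?case: eqP; lia.
have := odd_double_half k; have := odd_double_half k.-1.
by case: (odd k); case: (odd k.-1) => /=; do 2?case: eqP; lia.
Qed.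

Section Circulant.
Variables (n : nat) (S : seq nat).
Hypotheses (S_uniq : uniq S) (one_in_S : 1 \in S).
Hypotheses (S_range : {in S, forall s, 0 < s < n})
  (S_coprime : {in S, forall s, coprime s (2 * n)}).

Local Notation adj := (@circ_adj (2 * n) S).
Local Notation L := (size S).

Lemma n_gt1 : 1 < n.
Proof. by have /andP[] := S_range one_in_S. Qed.

Fact ltn_mod2n k : k %% (2 * n) < 2 * n.
Proof. by rewrite ltn_pmod //; have := n_gt1; lia. Qed.

Definition shift (v : 'I_(2 * n)) (s : nat) : 'I_(2 * n) := Ordinal (ltn_mod2n (v + s)).

Lemma shift_eq v s s' : (shift v s == shift v s') = (s == s' %[mod 2 * n]).
Proof. by rewrite -val_eqE /= eqn_modDl. Qed.

Lemma shift_shift v s s' : shift (shift v s) s' = shift v (s + s').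
Proof. by apply: val_inj; rewrite /= modnDml addnA. Qed.

Lemma shift_eq_self v s : (shift v s == v) = (s %% (2 * n) == 0).
Proof.
have v0 : v = shift v 0 by apply: val_inj; rewrite /= addn0 modn_small.
by rewrite [X in _ == X]v0 shift_eq mod0n.
Qed.

Lemma shift_neq s v : s \in S -> shift v s != v.
Proof. by move/S_range=> s_range; rewrite shift_eq_self modn_small; lia. Qed.

Lemma circ_adj_shift s v : s \in S -> adj v (shift v s).
Proof.
move=> S_s; rewrite /circ_adj eq_sym shift_neq //=.
by apply/hasP; exists s => //; rewrite eqxx orbT.
Qed.

Lemma S_odd s : s \in S -> odd s.
Proof. by move/S_coprime; rewrite coprimeMr coprimen2 => /andP[]. Qed.

Lemma odd_mod2n k : odd (k %% (2 * n)) = odd k.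
Proof. by rewrite odd_mod // oddM. Qed.

Lemma circ_adj_parity x y : adj x y -> odd x != odd y.
Proof.
case/andP=> _ /hasP[s /S_odd odd_s /orP[] /eqP ->];
  by rewrite odd_mod2n oddD odd_s; case: odd.
Qed.

Lemma size_S_lt : L < n.
Proof.
have: L <= size (iota 1 n.-1).
  by apply: uniq_leq_size => // s /S_range; rewrite mem_iota; lia.
by rewrite size_iota; have := n_gt1; lia.
Qed.

Definition gen (j : 'I_L) : nat := nth 0 S j.

Lemma gen_in j : gen j \in S.
Proof. exact: mem_nth. Qed.

Lemma genP s : s \in S -> exists j, gen j = s.
Proof.
move=> S_s; have lt_s : index s S < L by rewrite index_mem.
by exists (Ordinal lt_s); rewrite /gen nth_index.
Qed.

Lemma gen_inj : injective gen.
Proof. by move=> i j /eqP; rewrite nth_uniq // => /eqP /val_inj. Qed.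

Definition cyc (j : 'I_L) (k : 'I_(2 * n)) : 'I_(2 * n) := Ordinal (ltn_mod2n (k * gen j)).

Lemma cyc_inj j : injective (cyc j).
Proof.
move=> k k' /(congr1 val) /= /eqP.
by rewrite eqn_modMr_coprime ?S_coprime ?gen_in // !modn_small // => /eqP /val_inj.
Qed.

Lemma cyc_ordS j k : cyc j (ordS k) = shift (cyc j k) (gen j).
Proof. by apply: val_inj; rewrite /= modnMml modnDml mulSn addnC. Qed.

Lemma odd_cyc j k : odd (cyc j k) = odd k.
Proof. by rewrite /= odd_mod2n oddM (S_odd (@gen_in j)) andbT. Qed.

Definition cyc_pos (j : 'I_L) : 'I_(2 * n) -> 'I_(2 * n) := invF (@cyc_inj j).

Definition cyc_edge (d : 'I_L * 'I_(2 * n)) : {set 'I_(2 * n)} :=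
  [set cyc d.1 d.2; cyc d.1 (ordS d.2)].

Lemma cyc_edgeE j k : cyc_edge (j, k) = [set cyc j k; shift (cyc j k) (gen j)].
Proof. by rewrite /cyc_edge cyc_ordS. Qed.

Lemma shift_pair_inj u u' s s' : s \in S -> s' \in S ->
  [set u; shift u s] = [set u'; shift u' s'] -> u = u' /\ s = s'.
Proof.
move=> S_s S_s' E.
have s_lt : s < 2 * n by have := S_range S_s; lia.
have s'_lt : s' < 2 * n by have := S_range S_s'; lia.
have /set2P[uu' | u_sh] : u \in [set u'; shift u' s'] by rewrite -E set21.
  subst u'; split => //; apply/eqP.
  rewrite -(modn_small s_lt) -(modn_small s'_lt) -(shift_eq u).
  have /set2P[/eqP | -> //] : shift u s \in [set u; shift u s'] by rewrite -E set22.
  by rewrite (negbTE (shift_neq u S_s)).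
have /set2P[u'u | u'_sh] : u' \in [set u; shift u s] by rewrite E set21.
  by move: (shift_neq u' S_s'); rewrite -u_sh u'u eqxx.
have /eqP := u_sh; rewrite u'_sh shift_shift eq_sym shift_eq_self modn_small.
  by have := S_range S_s; have := S_range S_s'; lia.
by have := S_range S_s; have := S_range S_s'; lia.
Qed.

Lemma cyc_edge_inj : injective cyc_edge.
Proof.
move=> [j k] [j' k']; rewrite !cyc_edgeE.
move=> /(shift_pair_inj (@gen_in j) (@gen_in j'))[E /gen_inj jj'].
by subst j'; rewrite (cyc_inj E).
Qed.

Lemma edges_circ : edges adj = cyc_edge @: setT.
Proof.
have shift_edge s x : s \in S -> [set x; shift x s] \in cyc_edge @: setT.
  move=> /genP[j <-]; apply/imsetP; exists (j, cyc_pos j x) => //.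
  by rewrite cyc_edgeE f_invF.
apply/setP => e; apply/idP/idP.
  rewrite inE => /existsP[x /existsP[y /andP[/andP[_ /hasP[s S_s xy_s]] /eqP ->]]].
  case/orP: xy_s => /eqP xy.
    by rewrite setUC (_ : x = shift y s) ?shift_edge //; apply: val_inj.
  by rewrite (_ : y = shift x s) ?shift_edge //; apply: val_inj.
case/imsetP=> [[j k] _ ->]; rewrite cyc_edgeE inE.
apply/existsP; exists (cyc j k); apply/existsP; exists (shift (cyc j k) (gen j)).
by rewrite circ_adj_shift ?gen_in ?eqxx.
Qed.

Lemma mem_cyc_edge x j k :
  (x \in cyc_edge (j, k)) = (k == cyc_pos j x) || (k == ord_pred (cyc_pos j x)).
Proof.
have cycK := can2_eq (invF_f (@cyc_inj j)) (f_invF (@cyc_inj j)).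
by rewrite !inE ![x == _]eq_sym !cycK (can2_eq (@ordSK _) (@ord_predK _)).
Qed.

Definition cyc_label (d : 'I_L * 'I_(2 * n)) : nat := 2 * n * d.1 + cycle_label n d.2.

Lemma cyc_label_range d : 0 < cyc_label d <= #|{: 'I_L * 'I_(2 * n)}|.
Proof.
case: d => j k; rewrite card_prod !card_ord /cyc_label /=.
have := cycle_label_range (ltn_ord k); have := ltn_ord j; nia.
Qed.

Lemma cyc_label_inj : injective cyc_label.
Proof.
have n2_gt0 : 0 < 2 * n by have := n_gt1; lia.
have decomp d : (cyc_label d).-1 = d.1 * (2 * n) + (cycle_label n d.2).-1.
  by have := cycle_label_range (ltn_ord d.2); rewrite /cyc_label; lia.
have lt_label (k : 'I_(2 * n)) : (cycle_label n k).-1 < 2 * n.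
  by have := cycle_label_range (ltn_ord k); lia.
move=> [j k] [j' k'] /(congr1 predn); rewrite !decomp /= => E.
have := congr1 (divn^~ (2 * n)) E.
rewrite /= !divnMDl // !divn_small ?lt_label // !addn0 => /ord_inj jj'.
have := congr1 (modn^~ (2 * n)) E; rewrite /= !modnMDl !modn_small ?lt_label // => E'.
subst j'; congr pair; apply: (@cycle_label_inj n).
by have := cycle_label_range (ltn_ord k); have := cycle_label_range (ltn_ord k'); lia.
Qed.

Local Notation f := (induced_labeling cyc_edge cyc_label).

Lemma odd_cyc_pos j x : odd (cyc_pos j x) = odd x.
Proof. by rewrite -[in RHS](f_invF (@cyc_inj j) x) odd_cyc. Qed.

Lemma cyc_layer_sum x j :
  \sum_(k | x \in cyc_edge (j, k)) cyc_label (j, k) =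
  4 * n * j + (cycle_label n (cyc_pos j x) + cycle_label n (ord_pred (cyc_pos j x))).
Proof.
have pred_neq : ord_pred (cyc_pos j x) != cyc_pos j x.
  by apply: ord_pred_neq; have := n_gt1; lia.
under eq_bigl do rewrite mem_cyc_edge.
rewrite (bigD1 (cyc_pos j x)) ?eqxx //=.
rewrite (bigD1 (ord_pred (cyc_pos j x))) /=; last by rewrite eqxx orbT pred_neq.
rewrite big_pred0 => [|k]; first by rewrite /cyc_label /=; lia.
by rewrite /=; case: (k == cyc_pos j x); case: (k == ord_pred _).
Qed.

Lemma vsum_cyc (x : 'I_(2 * n)) :
  vsum adj f x =
  \sum_(j < L) (4 * n * j +
    (cycle_label n (cyc_pos j x) + cycle_label n (ord_pred (cyc_pos j x)))).
Proof.
rewrite (vsum_induced cyc_label cyc_edge_inj edges_circ).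
rewrite -(eq_bigr _ (fun j _ => cyc_layer_sum x j)).
by rewrite pair_big_dep; apply: eq_big => [[j k] | [j k] _].
Qed.

Definition base : nat := \sum_(j < L) (4 * n * j + 2 * n).

Lemma vsum_even (x : 'I_(2 * n)) : ~~ odd x -> vsum adj f x = base + L.
Proof.
move=> even_x; rewrite vsum_cyc (eq_bigr (fun j : 'I_L => (4 * n * j + 2 * n) + 1)).
  by rewrite big_split sum_nat_const card_ord muln1.
by move=> j _; rewrite cycle_label_pred odd_cyc_pos even_x /=; lia.
Qed.

Lemma card_cyc_pos_last_le1 (x : 'I_(2 * n)) :
  #|[pred j : 'I_L | (cyc_pos j x).+1 == 2 * n]| <= 1.
Proof.
have shift_zero j : (cyc_pos j x).+1 = 2 * n -> (x + gen j) %% (2 * n) = 0.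
  move=> last_j; have := cyc_ordS j (cyc_pos j x); rewrite f_invF => /(congr1 val) /= <-.
  by rewrite last_j modnn mul0n mod0n.
apply/card_le1_eqP => j j'; rewrite !inE => /eqP/shift_zero sj /eqP/shift_zero sj'.
have gen_lt i : gen i < 2 * n by have := S_range (@gen_in i); lia.
apply/gen_inj/eqP; rewrite -(modn_small (gen_lt j)) -(modn_small (gen_lt j')).
by rewrite -(eqn_modDl x) sj sj'.
Qed.

Lemma vsum_odd (x : 'I_(2 * n)) :
  odd x -> (vsum adj f x == base) || (vsum adj f x == base + n).
Proof.
move=> odd_x; rewrite vsum_cyc (eq_bigr (fun j : 'I_L =>
  (4 * n * j + 2 * n) + (if (cyc_pos j x).+1 == 2 * n then n else 0))); last first.
  by move=> j _; rewrite cycle_label_pred odd_cyc_pos odd_x /=; case: eqP; lia.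
rewrite big_split -big_mkcond sum_nat_const /= -/base.
have := card_cyc_pos_last_le1 x; case: (#|_|) => [|[|]] //= _.
  by rewrite mul0n addn0 eqxx.
by rewrite mul1n eqxx orbT.
Qed.

Lemma cyc_local_antimagic : local_antimagic adj f.
Proof.
split; first exact: edge_bij_induced cyc_edge_inj edges_circ cyc_label_inj cyc_label_range.
have L_range : 0 < L < n by move: one_in_S; rewrite size_S_lt andbT; case: (S).
have sums_differ (x y : 'I_(2 * n)) : odd x -> ~~ odd y -> vsum adj f x != vsum adj f y.
  move=> odd_x even_y; rewrite (vsum_even even_y).
  by case/orP: (vsum_odd odd_x) => /eqP ->; lia.
move=> x y /circ_adj_parity; case odd_x: (odd x); case odd_y: (odd y) => // _.
  by apply: sums_differ; rewrite ?odd_x ?odd_y.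
by rewrite eq_sym; apply: sums_differ; rewrite ?odd_x ?odd_y.
Qed.

Lemma n_colors_cyc : n_colors adj f <= 3.
Proof.
rewrite /n_colors -[3]/(size [:: base + L; base; base + n]).
apply: uniq_leq_size; first exact: undup_uniq.
move=> z; rewrite mem_undup => /mapP[x _ ->]; rewrite !inE.
case: (boolP (odd x)) => [/vsum_odd /orP[] -> | /vsum_even ->]; by rewrite ?orbT ?eqxx.
Qed.

Theorem chi_la_circulant : chi_la_eq adj 3.
Proof.
have lower g : local_antimagic adj g -> 3 <= n_colors adj g.
  apply: three_le_n_colors; [by have := n_gt1; lia | | exact: circ_adj_parity].
  move=> x y y_succ; rewrite (_ : y = shift x 1); first exact: circ_adj_shift.
  by apply: val_inj; rewrite /= addn1 -y_succ modn_small ?ltn_ord.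
split=> //; exists f; split; first exact: cyc_local_antimagic.
by apply/eqP; rewrite eqn_leq n_colors_cyc lower //; exact: cyc_local_antimagic.
Qed.

End Circulant.

Theorem mainTheorem6 (n : nat) (a : seq nat) :
  2 <= n ->
  sorted ltn a ->
  all (fun x => (1 < x) && (x < n)) a ->
  all (fun x => coprime x (2 * n)) a ->
  @chi_la_eq 'I_(2 * n) (@circ_adj (2 * n) (1 :: a)) 3.
Proof.
move=> n_ge2 a_sorted a_range a_coprime; apply: chi_la_circulant.
- apply: (sorted_uniq ltn_trans ltnn); rewrite /= (path_sortedE ltn_trans) a_sorted andbT.
  by apply/allP => s /(allP a_range) /andP[].
- exact: mem_head.
- move=> s; rewrite inE => /predU1P[-> | /(allP a_range) /andP[]]; lia.
- by move=> s; rewrite inE => /predU1P[-> | /(allP a_coprime)] //; rewrite coprime1n.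
Qed.
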